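(* Let $T$ be a complex torus, $\Gamma$ a finite subgroup of $\mathrm{Aut}(T)=\mathrm{Aut}_0(T)\ltimes t(T)$, $\mathbb T=T\setminus\Gamma\cdot\{0\}$, and $\pi:\mathbb T\to\mathbb T/\Gamma$ the canonical projection. Then the number of branch points of $\pi$ is $0$ if $\Gamma\subseteq t(T)$; $2$ if $\Gamma=C_\ell\ltimes1$ with $\ell\in\{3,4,6\}$, or $\Gamma=C_3\ltimes(C_2\times C_2)$; $3$ if $\Gamma=C_2\ltimes C_N$ ($N\ge1$).
   Context: $\mathrm{Aut}(T)$ is the group of biholomorphisms of $T$, $\mathrm{Aut}_0(T)$ the subgroup fixing $0$ (the maps $z\mapsto\epsilon z$ for roots of unity $\epsilon$ with $\epsilon\Lambda=\Lambda$, $T=\mathbb C/\Lambda$), and $t(T)$ the subgroup of translations. Writing $\Gamma=G\ltimes K$ means $G\subseteq\mathrm{Aut}_0(T)$, $K\subseteq t(T)$ and $\Gamma$ is generated by $G$ and $K$; $C_m$ denotes a cyclic group of order $m$ and $1$ the trivial group. A branch point of $\pi$ is the image of a point of $\mathbb T$ with nontrivial stabilizer in $\Gamma$. *)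

From HB Require Import structures.
From mathcomp Require Import all_boot all_order all_algebra.
From mathcomp Require Import complex.
From mathcomp Require Import boolp classical_sets cardinality reals.
Set Implicit Arguments. Unset Strict Implicit. Unset Printing Implicit Defensive.
Import Order.TTheory GRing.Theory Num.Theory.
Local Open Scope ring_scope.
Local Open Scope classical_set_scope.
Local Open Scope complex_scope.

Section Torus.
Variable R : realType.
Local Notation C := (R[i]).

(* The lattice Lambda = Z w1 + Z w2 (a genuine lattice when w1, w2 are
   R-linearly independent, see [is_lattice_basis]); T = C / Lambda. *)
Definition Lat (w1 w2 : C) : set C :=
  [set z | exists m n : int, z = m%:~R * w1 + n%:~R * w2].

Definition is_lattice_basis (w1 w2 : C) : Prop :=
  forall a b : R, a%:C * w1 + b%:C * w2 = 0 -> a = 0 /\ b = 0.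

(* eps gives an element z |-> eps z of Aut_0(T): a root of unity with
   eps Lambda = Lambda. *)
Definition in_Aut0 (w1 w2 : C) (eps : C) : Prop :=
  (exists n : nat, (0 < n)%N /\ eps ^+ n = 1) /\
  (fun z => eps * z) @` Lat w1 w2 = Lat w1 w2.

(* An element of Aut(T) = Aut_0(T) |x t(T) is represented by a pair
   (eps, b) acting by [z] |-> [eps z + b]; two pairs represent the same
   automorphism iff the eps agree and the b differ by a lattice vector.
   A subset of Aut(T) is represented by a set of pairs saturated for
   this relation. *)
Definition aut_sat (w1 w2 : C) (A : set (C * C)) : Prop :=
  forall e b b', A (e, b) -> Lat w1 w2 (b' - b) -> A (e, b').

Definition in_Aut (w1 w2 : C) (A : set (C * C)) : Prop :=
  forall e b, A (e, b) -> in_Aut0 w1 w2 e.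

(* subgroup of Aut(T): contains the identity, closed under composition
   (e1,b1) o (e2,b2) = (e1 e2, e1 b2 + b1) and under inverses. *)
Definition is_aut_subgroup (w1 w2 : C) (G : set (C * C)) : Prop :=
  [/\ in_Aut w1 w2 G, aut_sat w1 w2 G, G (1, 0),
      (forall e1 b1 e2 b2, G (e1, b1) -> G (e2, b2) ->
           G (e1 * e2, e1 * b2 + b1)) &
      (forall e b, G (e, b) -> G (e^-1, - (e^-1 * b)))].

Definition aut_finite (w1 w2 : C) (G : set (C * C)) : Prop :=
  exists (n : nat) (f : 'I_n -> C * C), forall p, G p ->
    exists i, (f i).1 = p.1 /\ Lat w1 w2 (p.2 - (f i).2).

Definition is_finite_aut_subgroup (w1 w2 : C) (G : set (C * C)) : Prop :=
  is_aut_subgroup w1 w2 G /\ aut_finite w1 w2 G.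

Definition generated_by (w1 w2 : C) (G A : set (C * C)) : Prop :=
  is_aut_subgroup w1 w2 G /\
  (forall e b, A (e, b) -> G (e, b)) /\
  (forall H, is_aut_subgroup w1 w2 H ->
     (forall e b, A (e, b) -> H (e, b)) -> forall p, G p -> H p).

Definition cyclic_Aut0_of_order (w1 w2 : C) (l : nat) (Gp : set (C * C)) :=
  exists eps : C, [/\ in_Aut0 w1 w2 eps, eps ^+ l = 1,
     (forall j : nat, (0 < j)%N -> (j < l)%N -> eps ^+ j != 1) &
     Gp = [set p | exists j : nat, p = (eps ^+ j, 0)]].

Definition cyclic_t_of_order (w1 w2 : C) (N : nat) (K : set (C * C)) :=
  exists k : C, [/\ Lat w1 w2 (N%:R * k),
     (forall j : nat, (0 < j)%N -> (j < N)%N -> ~ Lat w1 w2 (j%:R * k)) &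
     K = [set p | exists j : nat, p = (1, j%:R * k)]].

Definition klein_t (w1 w2 : C) (K : set (C * C)) :=
  exists k1 k2 : C,
    [/\ Lat w1 w2 (2%:R * k1), Lat w1 w2 (2%:R * k2),
        [/\ ~ Lat w1 w2 k1, ~ Lat w1 w2 k2 & ~ Lat w1 w2 (k1 - k2)] &
        K = [set p | exists a b : nat, p = (1, a%:R * k1 + b%:R * k2)]].

(* Gamma = G |x K : Gamma generated by G (in Aut_0) and K (in t(T)) *)
Definition semidirect_is (w1 w2 : C) (Gam Gp K : set (C * C)) : Prop :=
  generated_by w1 w2 Gam (Gp `|` K).

(* Gamma-orbit of [z] in T, as a Lambda-saturated subset of C *)
Definition orbitC (G : set (C * C)) (z : C) : set C :=
  [set w | exists e b, G (e, b) /\ w = e * z + b].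

Definition nontriv_stab (w1 w2 : C) (G : set (C * C)) (z : C) : Prop :=
  exists e b, [/\ G (e, b), ~ (e = 1 /\ Lat w1 w2 b) &
                  Lat w1 w2 (e * z + b - z)].

(* branch points of pi : TT -> TT / Gamma, TT = T \ Gamma.{0}: the images
   (Gamma-orbits) of points of TT with nontrivial stabilizer *)
Definition branch_points (w1 w2 : C) (G : set (C * C)) : set (set C) :=
  [set O | exists z, [/\ ~ orbitC G 0 z, nontriv_stab w1 w2 G z &
                         O = orbitC G z]].

Definition num_branch_points (w1 w2 : C) (G : set (C * C)) (n : nat) : Prop :=
  card_eq (branch_points w1 w2 G) [set: 'I_n].

End Torus.

(* In each case Gamma = <eps> |x M, where M is a lattice containing Lambda and
   stable under a root of unity eps of order l in {2, 3, 4, 6}; the branch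
   points are the <eps>-orbits of the classes of the z \notin M such that
   (1 - rho) z \in M for some rho = eps^j <> 1.  Since rho^12 = 1 and rho <> 1,
   12 z = sum_(i < 12) (1 - rho^i) z lies in M.  So, in coordinates with respect
   to a basis of M on which eps acts by an integer matrix, every such z lies on
   the grid (1/12)Z^2 / Z^2, and the count is a finite computation.  For
   l = 3, 4, 6 such a basis is (v, eps v) with v a shortest vector of M
   (M = Lambda, or M = Lambda / 2 for C_3 |x (C_2 x C_2), whose half-periods
   generate it together with Lambda); for eps = -1, M = Lambda + Z k gets a
   basis from Bezout's identity. *)

From HB Require Import structures.
From mathcomp Require Import all_boot all_order all_algebra.
From mathcomp Require Import complex.
From mathcomp Require Import boolp classical_sets cardinality reals.
From mathcomp Require Import zify ring lra.
Import Order.TTheory GRing.Theory Num.Theory.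
Local Open Scope ring_scope.
Local Open Scope classical_set_scope.

Set Implicit Arguments. Unset Strict Implicit. Unset Printing Implicit Defensive.

Section Torus.
Local Open Scope complex_scope.
Variable R : realType.
Local Notation C := (R[i]).

Implicit Types (e z w : C).

Lemma lat0 (u1 u2 : C) : Lat u1 u2 0.
Proof. by exists 0, 0; rewrite !mul0r addr0. Qed.

Lemma latB (u1 u2 : C) z w : Lat u1 u2 z -> Lat u1 u2 w -> Lat u1 u2 (z - w).
Proof. by move=> [m [n ->]] [m' [n' ->]]; exists (m - m'), (n - n'); rewrite !intrB; ring. Qed.

Lemma latN (u1 u2 : C) z : Lat u1 u2 z -> Lat u1 u2 (- z).
Proof. by move=> Lz; rewrite -sub0r; apply: latB => //; apply: lat0. Qed.

Lemma latD (u1 u2 : C) z w : Lat u1 u2 z -> Lat u1 u2 w -> Lat u1 u2 (z + w).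
Proof. by move=> Lz Lw; rewrite -[w]opprK; apply/latB/latN. Qed.

Lemma latZ (u1 u2 : C) (m : int) z : Lat u1 u2 z -> Lat u1 u2 (m%:~R * z).
Proof. by move=> [a [b ->]]; exists (m * a), (m * b); rewrite !intrM; ring. Qed.

Lemma lat_l (u1 u2 : C) : Lat u1 u2 u1.
Proof. by exists 1, 0; rewrite mul1r mul0r addr0. Qed.

Lemma lat_r (u1 u2 : C) : Lat u1 u2 u2.
Proof. by exists 0, 1; rewrite mul1r mul0r add0r. Qed.

Lemma lat_sub (u1 u2 v1 v2 : C) :
  Lat v1 v2 u1 -> Lat v1 v2 u2 -> Lat u1 u2 `<=` Lat v1 v2.
Proof. by move=> L1 L2 z [m [n ->]]; apply: latD; apply: latZ. Qed.

Lemma lat_stable (u1 u2 : C) e : Lat u1 u2 (e * u1) -> Lat u1 u2 (e * u2) ->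
  forall z, Lat u1 u2 z -> Lat u1 u2 (e * z).
Proof.
move=> L1 L2 z [m [n ->]]; rewrite mulrDr [e * (_ * u1)]mulrCA [e * (_ * u2)]mulrCA.
by apply: latD; apply: latZ.
Qed.

Lemma lat_stableX (u1 u2 : C) e : (forall z, Lat u1 u2 z -> Lat u1 u2 (e * z)) ->
  forall j z, Lat u1 u2 z -> Lat u1 u2 (e ^+ j * z).
Proof.
by move=> Le; elim=> [|j IH] z Lz; rewrite ?expr0 ?mul1r // exprSr -mulrA; apply/IH/Le.
Qed.

Lemma lat_basis_inj (u1 u2 : C) (x y x' y' : int) : is_lattice_basis u1 u2 ->
  x%:~R * u1 + y%:~R * u2 = x'%:~R * u1 + y'%:~R * u2 -> x = x' /\ y = y'.
Proof.
move=> hb e; have [] := hb (x - x')%:~R (y - y')%:~R.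
  by rewrite !rmorph_int !intrB !mulrBl addrACA e -opprD subrr.
by move=> /eqP; rewrite intr_eq0 subr_eq0 => /eqP -> /eqP; rewrite intr_eq0 subr_eq0 => /eqP.
Qed.

Lemma intrC (m : int) : (m%:~R : C) = (m%:~R : R)%:C.
Proof. by rewrite rmorph_int. Qed.

(* By [lat_fixed_torsion] and [lat_mul12_grid], every point with a nontrivial
   stabilizer is congruent to some [pt12 u1 u2 p] with [p \in grid12]. *)
Definition pt12 (u1 u2 : C) (p : int * int) : C :=
  (p.1%:~R * u1 + p.2%:~R * u2) / 12.

Definition lat12 (p : int * int) : bool := (12 %| p.1)%Z && (12 %| p.2)%Z.

Definition subp (p q : int * int) : int * int := (p.1 - q.1, p.2 - q.2).

Definition grid12 : seq (int * int) :=
  [seq (x%:Z, y%:Z) | x <- iota 0 12, y <- iota 0 12].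

Lemma pt12B (u1 u2 : C) p q : pt12 u1 u2 p - pt12 u1 u2 q = pt12 u1 u2 (subp p q).
Proof. by rewrite /pt12 !intrB; ring. Qed.

Lemma pt12_latP (u1 u2 : C) p : is_lattice_basis u1 u2 ->
  reflect (Lat u1 u2 (pt12 u1 u2 p)) (lat12 p).
Proof.
have n12 : (12 : C) != 0 by rewrite pnatr_eq0.
move=> hb; apply: (iffP andP) => [[/dvdzP [a ha] /dvdzP [b hb']]|[m [n e]]].
  by exists a, b; rewrite /pt12 ha hb' !intrM; field.
have [-> ->] : p.1 = m * 12 /\ p.2 = n * 12.
  apply: (lat_basis_inj hb); move: e => /(congr1 ( *%R^~ 12)).
  by rewrite /pt12 divfK // => ->; rewrite !intrM; ring.
by rewrite !dvdz_mull.
Qed.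

Lemma lat_mul12_grid (u1 u2 : C) z : Lat u1 u2 (12 * z) ->
  exists2 p, p \in grid12 & Lat u1 u2 (z - pt12 u1 u2 p).
Proof.
move=> [m [n e]]; exists ((m %% 12)%Z, (n %% 12)%Z).
  have grid k : (k %% 12)%Z = `|(k %% 12)%Z|%:Z /\ (`|(k %% 12)%Z| < 12)%N by lia.
  have [-> lt_m] := grid m; have [-> lt_n] := grid n.
  by apply: allpairs_f; rewrite mem_iota.
exists (m %/ 12)%Z, (n %/ 12)%Z.
have n12 : (12 : C) != 0 by rewrite pnatr_eq0.
apply: (mulfI n12); rewrite mulrBr e /pt12 (mulrC _ (_ / 12)) (divfK n12).
by rewrite {1}(divz_eq m 12) {1}(divz_eq n 12) !intrD !intrM; ring.
Qed.

Lemma pt12_iter (u1 u2 : C) A e : (forall p, e * pt12 u1 u2 p = pt12 u1 u2 (A p)) ->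
  forall j p, e ^+ j * pt12 u1 u2 p = pt12 u1 u2 (iter j A p).
Proof. by move=> eA; elim=> [|j IH] p; rewrite ?expr0 ?mul1r // exprS -mulrA IH eA. Qed.

Lemma lat_fixed_torsion (u1 u2 e z : C) k :
  (forall w, Lat u1 u2 w -> Lat u1 u2 (e * w)) -> e ^+ k = 1 -> e != 1 ->
  Lat u1 u2 ((1 - e) * z) -> Lat u1 u2 (k%:R * z).
Proof.
move=> stab ek ne1 Lm.
have Lsum n (F : 'I_n -> C) : (forall i, Lat u1 u2 (F i)) -> Lat u1 u2 (\sum_i F i).
  by move=> LF; apply: (big_ind (Lat u1 u2)) => //; [apply: lat0|apply: latD].
have geom1 j : 1 - e ^+ j = (\sum_(i < j) e ^+ i) * (1 - e).
  by rewrite -opprB subrX1 -mulNr opprB mulrC.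
have geom0 : \sum_(i < k) e ^+ i = 0.
  have := subrX1 e k; rewrite ek subrr => /esym/eqP.
  by rewrite mulf_eq0 subr_eq0 (negbTE ne1) => /eqP.
have -> : k%:R * z = \sum_(j < k) \sum_(i < j) e ^+ i * ((1 - e) * z).
  transitivity (\sum_(j < k) (1 - e ^+ j) * z).
    by rewrite -mulr_suml sumrB sumr_const card_ord geom0 subr0.
  by apply: eq_bigr => j _; rewrite -mulr_suml mulrA geom1.
by apply/Lsum => j; apply/Lsum => i; apply: lat_stableX.
Qed.

(* [A] is the action of eps on coordinates and [l] the order of eps;
   [branch_reps12 A l ps] is a certificate, checked by computation, that the
   points [pt12 u1 u2 p] for p in ps represent every orbit of branch points
   exactly once. *)
Section Grid.
Variables (A : int * int -> int * int) (l : nat).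

Definition fixed12 (p : int * int) : bool :=
  has (fun j => lat12 (subp p (iter j A p))) (iota 1 l.-1).

Definition branch12 (p : int * int) : bool := ~~ lat12 p && fixed12 p.

Definition orbit12 (p q : int * int) : bool :=
  has (fun j => lat12 (subp q (iter j A p))) (iota 0 l).

Definition branch_reps12 (ps : seq (int * int)) : bool :=
  [&& all branch12 ps,
      all (fun q => branch12 q ==> has (orbit12^~ q) ps) grid12 &
      all (fun i => all (fun j =>
             orbit12 (nth (0, 0) ps i) (nth (0, 0) ps j) ==> (i == j))
           (iota 0 (size ps))) (iota 0 (size ps))].

End Grid.

Section AutSubgroup.
Variables (w1 w2 : C) (G : set (C * C)).
Hypothesis hG : is_aut_subgroup w1 w2 G.

Lemma aut_neq0 e b : G (e, b) -> e != 0.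
Proof.
case: hG => hA _ _ _ _ /hA [[n [n0 hn]] _]; apply/eqP => e0; move: hn.
by rewrite e0 expr0n gtn_eqF // => /eqP; rewrite eq_sym oner_eq0.
Qed.

Lemma transD a b : G (1, a) -> G (1, b) -> G (1, a + b).
Proof. by case: hG => _ _ _ hM _ ha hb; have := hM _ _ _ _ ha hb; rewrite !mul1r addrC. Qed.

Lemma transN a : G (1, a) -> G (1, - a).
Proof. by case: hG => _ _ _ _ hI /hI; rewrite invr1 mul1r. Qed.

Lemma transZ a (m : int) : G (1, a) -> G (1, m%:~R * a).
Proof.
move=> ha; have transMn k : G (1, k%:R * a).
  elim: k => [|k IH]; first by rewrite mul0r; case: hG.
  by rewrite -addn1 natrD mulrDl mul1r; apply: transD.
by case: m => k; rewrite ?NegzE ?intrN ?mulNr; [|apply: transN]; apply: transMn.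
Qed.

Lemma trans_lat b : Lat w1 w2 b -> G (1, b).
Proof. by case: hG => _ hS h1 _ _ hb; apply: (hS _ _ _ h1); rewrite subr0. Qed.

Lemma trans_span u1 u2 : G (1, u1) -> G (1, u2) -> forall b, Lat u1 u2 b -> G (1, b).
Proof. by move=> h1 h2 b [m [n ->]]; apply: transD; apply: transZ. Qed.

Lemma trans_conj e a : G (e, 0) -> G (1, a) -> G (1, e * a).
Proof.
move=> he ha; have [_ _ _ hM hI] := hG.
have := hM _ _ _ _ (hM _ _ _ _ he ha) (hI _ _ he).
by rewrite mulr1 mulfV ?(aut_neq0 he) // mulr0 oppr0 mulr0 addr0 add0r.
Qed.

Lemma rot_pow e : G (e, 0) -> forall j, G (e ^+ j, 0).
Proof.
move=> he; elim => [|j IH]; first by case: hG.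
by have [_ _ _ hM _] := hG; have := hM _ _ _ _ he IH; rewrite mulr0 addr0 -exprS.
Qed.

Lemma orbitC_eq z w : orbitC G z w -> orbitC G w = orbitC G z.
Proof.
move=> [e [b [Geb ->]]]; have [_ _ _ hM hI] := hG; have e0 := aut_neq0 Geb.
rewrite predeqE => y; split => -[e' [b' [G' ->]]].
  by exists (e' * e), (e' * b + b'); split; [apply: hM|ring].
exists (e' * e^-1), (e' * - (e^-1 * b) + b'); split; first by apply/hM/hI.
by field.
Qed.

End AutSubgroup.

Section BranchPointReps.
Variables (w1 w2 : C) (G : set (C * C)) (E M : set C).
Hypothesis hG : is_aut_subgroup w1 w2 G.
Hypothesis GE : forall e b, G (e, b) <-> E e /\ M b.
Hypothesis latM : Lat w1 w2 `<=` M.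
Hypothesis MB : forall x y, M x -> M y -> M (x - y).

Lemma orbitC0E z : orbitC G 0 z <-> M z.
Proof.
split => [[e [b [/GE [_ Mb] ->]]]|Mz]; first by rewrite mulr0 add0r.
have /GE [E1 _] : G (1, 0) by case: hG.
by exists 1, z; rewrite mulr0 add0r; split => //; apply/GE.
Qed.

Lemma nontriv_stabE z :
  nontriv_stab w1 w2 G z <-> exists e, [/\ E e, e != 1 & M ((1 - e) * z)].
Proof.
split => [[e [b [/GE [Ee Mb] ntriv Lfix]]]|[e [Ee ne1 Mfix]]].
  exists e; split => //.
    apply/eqP => e1; apply: ntriv; split => //.
    by move: Lfix; rewrite e1 mul1r addrC addKr.
  have -> : (1 - e) * z = b - (e * z + b - z) by ring.
  by apply: MB => //; apply: latM.
exists e, ((1 - e) * z); split; first by apply/GE.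
  by case=> /eqP; rewrite (negbTE ne1).
have -> : e * z + (1 - e) * z - z = 0 by ring.
exact: lat0.
Qed.

Lemma num_branch_points_reps n (p : 'I_n -> C) :
  (forall i, ~ M (p i) /\ exists e, [/\ E e, e != 1 & M ((1 - e) * p i)]) ->
  (forall z, ~ M z -> (exists e, [/\ E e, e != 1 & M ((1 - e) * z)]) ->
     exists i e, E e /\ M (z - e * p i)) ->
  (forall i j e, E e -> M (p j - e * p i) -> i = j) ->
  num_branch_points w1 w2 G n.
Proof.
move=> reps_branch reps_cover reps_inj; rewrite /num_branch_points.
suff -> : branch_points w1 w2 G = (fun i => orbitC G (p i)) @` setT.
  apply: inj_card_eq => i j _ _ orb_ij.
  have : orbitC G (p i) (p j).
    by rewrite orb_ij; exists 1, 0; split; [case: hG|rewrite mul1r addr0].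
  move=> [e [b [/GE [Ee Mb] pj]]]; apply: (reps_inj i j e Ee).
  by rewrite pj addrC addKr.
rewrite predeqE => O; split => [[z [notM0 /nontriv_stabE fix_z ->]]|[i _ <-]].
  have notMz : ~ M z by move/orbitC0E.
  have [i [e [Ee Mze]]] := reps_cover z notMz fix_z.
  exists i => //; apply/esym/(orbitC_eq hG).
  by exists e, (z - e * p i); split; [apply/GE|rewrite addrC subrK].
have [notM fix_i] := reps_branch i.
by exists (p i); split => //; [move/orbitC0E|apply/nontriv_stabE].
Qed.

End BranchPointReps.

Section GridCount.
Variables (w1 w2 eps u1 u2 : C) (G : set (C * C)).
Variables (A : int * int -> int * int) (l : nat).
Hypothesis hG : is_aut_subgroup w1 w2 G.
Hypothesis hb : is_lattice_basis u1 u2.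
Hypothesis latM : Lat w1 w2 `<=` Lat u1 u2.
Hypothesis GE : forall e b, G (e, b) <-> (exists j : nat, e = eps ^+ j) /\ Lat u1 u2 b.
Hypothesis eps_l : eps ^+ l = 1.
Hypothesis eps_neq1 : forall j, (0 < j)%N -> (j < l)%N -> eps ^+ j != 1.
Hypothesis l_dvd12 : (l %| 12)%N.
Hypothesis epsA : forall p, eps * pt12 u1 u2 p = pt12 u1 u2 (A p).

Local Notation E := (fun e => exists j : nat, e = eps ^+ j).
Local Notation pt := (pt12 u1 u2).

Lemma rot_mod e : E e -> exists2 j, (j < l)%N & e = eps ^+ j.
Proof.
have l0 : (0 < l)%N by case: l l_dvd12.
by move=> [j ->]; exists (j %% l)%N; rewrite ?ltn_pmod ?expr_mod.
Qed.

Lemma rot12 e : E e -> e ^+ 12 = 1.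
Proof.
move=> [j ->]; case/dvdnP: l_dvd12 => k ->.
by rewrite exprAC mulnC exprM eps_l !expr1n.
Qed.

Lemma lat_rot e : E e -> forall w, Lat u1 u2 w -> Lat u1 u2 (e * w).
Proof.
move=> Ee w Lw; have Ge : G (e, 0) by apply/GE; split => //; apply: lat0.
have Gw : G (1, w) by apply/GE; split => //; exists 0%N.
by have /GE [] := trans_conj hG Ge Gw.
Qed.

Lemma fixed12P p :
  reflect (exists e, [/\ E e, e != 1 & Lat u1 u2 ((1 - e) * pt p)]) (fixed12 A l p).
Proof.
have fixE j : (1 - eps ^+ j) * pt p = pt (subp p (iter j A p)).
  by rewrite mulrBl mul1r (pt12_iter epsA) pt12B.
apply: (iffP hasP) => [[j]|[e [/rot_mod [j lt_jl ->] ne1]]].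
  rewrite mem_iota => /andP [j0 jl] /(pt12_latP _ hb) Lj.
  by exists (eps ^+ j); rewrite fixE; split => //; [exists j|apply: eps_neq1; lia].
rewrite fixE => /(pt12_latP _ hb) Lj; exists j => //.
by rewrite mem_iota; case: j ne1 {Lj} lt_jl => [|j]; rewrite ?expr0 ?eqxx //; lia.
Qed.

Lemma orbit12P p q :
  reflect (exists2 e, E e & Lat u1 u2 (pt q - e * pt p)) (orbit12 A l p q).
Proof.
apply: (iffP hasP) => [[j _ /(pt12_latP _ hb)]|[e /rot_mod [j lt_jl ->]]].
  by rewrite -pt12B -(pt12_iter epsA); exists (eps ^+ j) => //; exists j.
by rewrite (pt12_iter epsA) pt12B => /(pt12_latP _ hb); exists j; rewrite ?mem_iota.
Qed.

Lemma num_branch_points_grid ps :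
  branch_reps12 A l ps -> num_branch_points w1 w2 G (size ps).
Proof.
case/and3P => /allP reps_branch /allP reps_cover /allP reps_inj.
pose p (i : 'I_(size ps)) := pt (nth (0, 0) ps i).
apply: (num_branch_points_reps (p := p) hG GE latM (@latB _ _)).
- move=> i; have /andP [notL /fixed12P fix_i] := reps_branch _ (mem_nth (0, 0) (ltn_ord i)).
  by split=> // /(pt12_latP _ hb); apply/negP.
- move=> z notLz [e [Ee ne1 Lfix]].
  have [q grid_q Lzq] := lat_mul12_grid (lat_fixed_torsion (lat_rot Ee) (rot12 Ee) ne1 Lfix).
  have : branch12 A l q.
    apply/andP; split.
      apply/negP => /(pt12_latP _ hb) Lq; apply: notLz.
      by rewrite -(subrK (pt q) z); apply: latD.
    apply/fixed12P; exists e; split => //.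
    have -> : (1 - e) * pt q = (1 - e) * z - ((1 - e) * (z - pt q)) by ring.
    by apply: latB => //; rewrite mulrBl mul1r; apply/latB/(lat_rot Ee).
  move=> /(implyP (reps_cover q grid_q)) /hasP [p' ps_p' /orbit12P [e' Ee' Lq]].
  have idx_lt : (index p' ps < size ps)%N by rewrite index_mem.
  exists (Ordinal idx_lt), e'; split => //.
  rewrite /p nth_index // -(subrK (pt q) z) -addrA.
  by apply: latD.
- move=> i j e Ee Lij.
  have iota_ord (k : 'I_(size ps)) : val k \in iota 0 (size ps) by rewrite mem_iota add0n ltn_ord.
  have /orbit12P : exists2 e, E e & Lat u1 u2 (p j - e * p i) by exists e.
  move/(implyP (allP (reps_inj i (iota_ord i)) j (iota_ord j))) => /eqP.
  exact: val_inj.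
Qed.

End GridCount.

Lemma in_Aut0X (w1 w2 e : C) j : in_Aut0 w1 w2 e -> in_Aut0 w1 w2 (e ^+ j).
Proof.
move=> [[n [n0 en]] eL]; split.
  by exists n; split => //; rewrite -exprM mulnC exprM en expr1n.
elim: j => [|j IH].
  have -> : (fun z => e ^+ 0 * z) = id by apply: funext => z; rewrite expr0 mul1r.
  exact: image_id.
have -> : (fun z => e ^+ j.+1 * z) = (fun z => e ^+ j * z) \o (fun z => e * z).
  by apply: funext => z /=; rewrite exprSr mulrA.
by rewrite -image_comp eL IH.
Qed.

Definition rot_trans (e u1 u2 : C) : set (C * C) :=
  [set p | (exists j : nat, p.1 = e ^+ j) /\ Lat u1 u2 p.2].

Lemma rot_trans_subgroup (w1 w2 e u1 u2 : C) : in_Aut0 w1 w2 e ->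
  Lat w1 w2 `<=` Lat u1 u2 -> Lat u1 u2 (e * u1) -> Lat u1 u2 (e * u2) ->
  is_aut_subgroup w1 w2 (rot_trans e u1 u2).
Proof.
move=> eA latM Le1 Le2; have LeX := lat_stableX (lat_stable Le1 Le2).
have [[n [n0 en]] _] := eA.
have eXV j : (e ^+ j)^-1 = e ^+ (j * n.-1).
  apply: mulr1_eq; rewrite -exprD -{1}(muln1 j) -mulnDr add1n prednK //.
  by rewrite mulnC exprM en expr1n.
split.
- by move=> _ _ [[j /= ->] _]; apply: in_Aut0X.
- move=> e' b b' [ej Lb] Lbb'; split => //=.
  by rewrite -(subrK b b'); apply: latD => //; apply: latM.
- by split; [exists 0%N|apply: lat0].
- move=> _ b1 _ b2 [[i /= ->] L1] [[j /= ->] L2]; split => /=.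
    by exists (i + j)%N; rewrite exprD.
  by apply: latD => //; apply: LeX.
- move=> _ b [[j /= ->] Lb]; rewrite eXV; split; first by exists (j * n.-1)%N.
  by apply/latN/LeX.
Qed.

Lemma semidirectE (w1 w2 e u1 u2 : C) Gam Gp K :
  in_Aut0 w1 w2 e -> Gp = [set p | exists j : nat, p = (e ^+ j, 0)] ->
  semidirect_is w1 w2 Gam Gp K ->
  Lat w1 w2 `<=` Lat u1 u2 -> Lat u1 u2 (e * u1) -> Lat u1 u2 (e * u2) ->
  (forall p, K p -> p.1 = 1 /\ Lat u1 u2 p.2) -> Gam (1, u1) -> Gam (1, u2) ->
  forall e' b, Gam (e', b) <-> (exists j : nat, e' = e ^+ j) /\ Lat u1 u2 b.
Proof.
move=> eA -> [hG [gens gen_min]] latM Le1 Le2 KL G1 G2 e' b; split.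
  apply: (gen_min _ (rot_trans_subgroup eA latM Le1 Le2)) => _ b' [[j [-> ->]]|/KL [/= -> Lb']].
    by split; [exists j|apply: lat0].
  by split; [exists 0%N|].
move=> [[j ->] Lb]; have [_ _ _ hM _] := hG.
have Ge : Gam (e, 0) by apply: gens; left; exists 1%N; rewrite expr1.
have := hM _ _ _ _ (trans_span hG G1 G2 Lb) (rot_pow hG Ge j).
by rewrite mul1r mulr0 add0r.
Qed.

Lemma in_Aut0_lat (w1 w2 e : C) : in_Aut0 w1 w2 e ->
  forall z, Lat w1 w2 z -> Lat w1 w2 (e * z).
Proof. by move=> [_ eL] z Lz; rewrite -eL; exists z. Qed.

Definition sqnorm (z : C) : R := complex.Re z ^+ 2 + complex.Im z ^+ 2.

Lemma sqnormM z w : sqnorm (z * w) = sqnorm z * sqnorm w.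
Proof. by case: z w => a b [c d]; rewrite /sqnorm /=; ring. Qed.

Lemma sqnorm_ge0 z : 0 <= sqnorm z.
Proof. by rewrite addr_ge0 ?sqr_ge0. Qed.

Lemma sqnorm_gt0 z : z != 0 -> 0 < sqnorm z.
Proof.
case: z => a b nz; rewrite lt_def sqnorm_ge0 andbT; apply: contra nz.
rewrite /sqnorm /= paddr_eq0 ?sqr_ge0 // !sqrf_eq0 => /andP [/eqP -> /eqP ->].
by [].
Qed.

Section QuadraticUnit.
Variables (e : C) (c : int).
Hypothesis e_quad : e ^+ 2 = c%:~R * e - 1.
Hypothesis c_small : (-1 <= c <= 1)%R.

Let c_cases : c = -1 \/ c = 0 \/ c = 1.
Proof. by lia. Qed.

Lemma quad_ReIm :
  [/\ complex.Re e = c%:~R / 2, complex.Im e ^+ 2 = 1 - c%:~R ^+ 2 / 4 & complex.Im e != 0].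
Proof.
move: e_quad; case: e => a b; rewrite expr2 intrC => -[ea eb] /=.
have cR : (-1 <= (c%:~R : R) <= 1)%R.
  by case: c_cases => [|[|]] ->; rewrite ?intrN ?mulr1z ?mulr0z; lra.
rewrite mul0r !subr0 mul0r addr0 in ea eb.
have b0 : b != 0.
  apply/eqP => b0; move: ea; rewrite b0 mulr0 subr0.
  have := sqr_ge0 (2 * a - c%:~R); nra.
have ha : a = c%:~R / 2.
  have : b * (2 * a - c%:~R) = 0 by rewrite mulrBr [b * c%:~R]mulrC -eb; ring.
  by move/eqP; rewrite mulf_eq0 (negbTE b0) /= subr_eq0 => /eqP; lra.
by split => //; move: ea; rewrite ha; lra.
Qed.

Lemma sqnorm_quad (s t : R) : sqnorm (s%:C + t%:C * e) = s ^+ 2 + c%:~R * s * t + t ^+ 2.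
Proof.
have [] := quad_ReIm; case: e => a b /= -> Im2 _.
by rewrite /sqnorm /= !mul0r !subr0 !addr0 add0r exprMn Im2; field.
Qed.

Lemma real_span z : exists s t : R, z = s%:C + t%:C * e.
Proof.
have [_ _] := quad_ReIm; case: e => a b /= b0; case: z => x y.
exists (x - y / b * a), (y / b); apply/eqP; rewrite eq_complex /=.
by apply/andP; split; apply/eqP; field.
Qed.

Lemma quad_round (s t : R) :
  exists x y : int, sqnorm ((s - x%:~R)%:C + (t - y%:~R)%:C * e) <= 3 / 4.
Proof.
exists (Num.floor (s + 1 / 2)), (Num.floor (t + 1 / 2)); rewrite sqnorm_quad.
have := floor_le (s + 1 / 2); have := floorD1_gt (s + 1 / 2).
have := floor_le (t + 1 / 2); have := floorD1_gt (t + 1 / 2).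
rewrite !intrD !mulr1z.
move: (Num.floor _)%:~R (Num.floor _)%:~R => x y.
by case: c_cases => [|[|]] ->; rewrite ?intrN ?mulr1z ?mulr0z; nra.
Qed.

Lemma quad_basis v : v != 0 -> is_lattice_basis v (e * v).
Proof.
move=> v0 a b h; have : (a%:C + b%:C * e) * v == 0 by rewrite -h mulrDl mulrA.
rewrite mulf_eq0 (negbTE v0) orbF.
have [_ _] := quad_ReIm; case: e => x y /= y0.
rewrite eq_complex /= !mul0r !subr0 !addr0 !add0r => /andP [/eqP ea /eqP].
by move/eqP; rewrite mulf_eq0 (negbTE y0) orbF => /eqP b0; move: ea; rewrite b0 mul0r addr0.
Qed.

Section StableLattice.
Variables (w1 w2 : C).
Hypothesis hb : is_lattice_basis w1 w2.
Hypothesis lat_stab : forall z, Lat w1 w2 z -> Lat w1 w2 (e * z).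

Lemma lat_basis_neq0 : w1 != 0.
Proof.
apply/eqP => w0; have [] := @hb 1 0; first by rewrite w0 mulr0 rmorph0 mul0r addr0.
by move/eqP; rewrite oner_eq0.
Qed.

(* With e w1 = p w1 + q w2, q (m w1 + n w2) = ((m q - n p) + n e) w1, whose
   first factor has an integral squared norm by [sqnorm_quad]. *)
Lemma lat_sqnorm_discrete :
  exists2 K : R, 0 < K & forall z, Lat w1 w2 z -> exists k : nat, sqnorm z = K * k%:R.
Proof.
have [p [q epq]] := lat_stab (lat_l w1 w2).
have q0 : q != 0.
  apply/eqP => q0; have [_ _ /negP] := quad_ReIm; apply.
  move: epq; rewrite q0 mul0r addr0 => /eqP; rewrite -subr_eq0 -mulrBl.
  by rewrite mulf_eq0 (negbTE lat_basis_neq0) orbF subr_eq0 intrC => /eqP ->.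
have q2_gt0 : 0 < sqnorm q%:~R by rewrite sqnorm_gt0 // intr_eq0.
exists (sqnorm w1 / sqnorm q%:~R); first by rewrite divr_gt0 // sqnorm_gt0 // lat_basis_neq0.
move=> _ [m [n ->]].
pose F := (m * q - n * p) ^+ 2 + c * (m * q - n * p) * n + n ^+ 2.
have normF : sqnorm q%:~R * sqnorm (m%:~R * w1 + n%:~R * w2) = sqnorm w1 * F%:~R.
  rewrite -sqnormM [q%:~R * _]mulrC.
  have -> : (m%:~R * w1 + n%:~R * w2) * q%:~R = ((m * q - n * p)%:~R + n%:~R * e) * w1.
    by rewrite intrB !intrM; ring: epq.
  rewrite sqnormM mulrC !intrC sqnorm_quad.
  by rewrite /F !(intrD, intrM, intrB, rmorphXn).
have F_ge0 : 0 <= F.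
  rewrite -(ler0z R) -(pmulr_rge0 _ (sqnorm_gt0 lat_basis_neq0)) -normF.
  exact: mulr_ge0 (sqnorm_ge0 _) (sqnorm_ge0 _).
exists `|F|%N; rewrite natr_absz ger0_norm //.
apply: (mulfI (lt0r_neq0 q2_gt0)); rewrite normF; field.
exact: lt0r_neq0.
Qed.

Lemma lat_shortest : exists v, [/\ Lat w1 w2 v, v != 0 &
  forall z, Lat w1 w2 z -> z != 0 -> sqnorm v <= sqnorm z].
Proof.
have [K K_gt0 disc] := lat_sqnorm_discrete.
pose P k := exists2 z, Lat w1 w2 z /\ z != 0 & sqnorm z = K * k%:R.
have exP : exists k, `[< P k >].
  have [k w1k] := disc _ (lat_l w1 w2).
  by exists k; apply/asboolP; exists w1 => //; split; [apply: lat_l|apply: lat_basis_neq0].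
case: (ex_minnP exP) => k /asboolP [v [Lv v0] vk] kmin.
exists v; split => // z Lz z0; have [k' zk'] := disc z Lz.
by rewrite vk zk' ler_pM2l // ler_nat; apply/kmin/asboolP; exists z.
Qed.

(* Rounding the coordinates of z / v in the real basis (1, e), for a shortest
   vector v, leaves a lattice vector of squared norm at most 3/4 sqnorm v. *)
Lemma lat_quad_span : exists2 v, v != 0 & Lat w1 w2 = Lat v (e * v).
Proof.
have [v [Lv v0 vmin]] := lat_shortest; exists v => //.
rewrite predeqE => z; split; last by apply: lat_sub => //; apply: lat_stab.
move=> Lz; have [s [t zv]] := real_span (z / v).
have [x [y small]] := quad_round s t.
pose r := z - (x%:~R * v + y%:~R * (e * v)).
have Lr : Lat w1 w2 r by apply/latB/latD => //; apply: latZ => //; apply: lat_stab.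
have rE : r = ((s - x%:~R)%:C + (t - y%:~R)%:C * e) * v.
  by rewrite /r -(divfK v0 z) zv !rmorphB /= -!intrC; ring.
have r0 : r = 0.
  apply/eqP; apply: contraT => /(vmin _ Lr); rewrite rE sqnormM.
  by have := sqnorm_gt0 v0; nra.
by exists x, y; apply/eqP; rewrite -subr_eq0 -/r r0.
Qed.

End StableLattice.

End QuadraticUnit.

Lemma lat_basis_unimodular (w1 w2 : C) (a b c d : int) (N : nat) :
  is_lattice_basis w1 w2 -> (0 < N)%N -> a * d - b * c = 1 ->
  is_lattice_basis ((a%:~R * w1 + b%:~R * w2) / N%:R) (c%:~R * w1 + d%:~R * w2).
Proof.
move=> hb N_gt0 det1 la mu h; pose n : R := N%:R.
have [E1 E2] : la * a%:~R + n * mu * c%:~R = 0 /\ la * b%:~R + n * mu * d%:~R = 0.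
  apply: hb; rewrite !(rmorphD, rmorphM) /= -!intrC rmorph_nat.
  rewrite -[RHS](mulr0 (N%:R : C)) -h; field.
  by rewrite pnatr_eq0 -lt0n.
pose det : R := a%:~R * d%:~R - b%:~R * c%:~R.
have det1R : det = 1 by rewrite /det -!intrM -intrB det1.
split.
  transitivity (la * det); first by rewrite det1R mulr1.
  by transitivity (d%:~R * (la * a%:~R + n * mu * c%:~R) - c%:~R * (la * b%:~R + n * mu * d%:~R));
    [rewrite /det; ring|rewrite E1 E2 !mulr0 subr0].
have n0 : n != 0 by rewrite pnatr_eq0 -lt0n.
apply: (mulfI n0); rewrite mulr0.
transitivity (n * mu * det); first by rewrite det1R mulr1.
by transitivity (a%:~R * (la * b%:~R + n * mu * d%:~R) - b%:~R * (la * a%:~R + n * mu * c%:~R));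
  [rewrite /det; ring|rewrite E1 E2 !mulr0 subr0].
Qed.

Lemma lat_add_eq (u1 u2 w1 w2 k : C) :
  Lat u1 u2 w1 -> Lat u1 u2 w2 -> Lat u1 u2 k ->
  (exists m : int, Lat w1 w2 (u1 - m%:~R * k)) -> (exists m : int, Lat w1 w2 (u2 - m%:~R * k)) ->
  Lat u1 u2 = [set z | exists m : int, Lat w1 w2 (z - m%:~R * k)].
Proof.
move=> Lw1 Lw2 Lk [m1 L1] [m2 L2]; rewrite predeqE => z; split => [[p [q ->]]|[m Lzm]].
  exists (p * m1 + q * m2).
  have -> : p%:~R * u1 + q%:~R * u2 - (p * m1 + q * m2)%:~R * k =
      p%:~R * (u1 - m1%:~R * k) + q%:~R * (u2 - m2%:~R * k) by rewrite intrD !intrM; ring.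
  by apply: latD; apply: latZ.
by rewrite -(subrK (m%:~R * k) z); apply: latD; [apply: lat_sub Lzm|apply: latZ].
Qed.

Section TorsionTranslation.
Variables (w1 w2 k : C) (N : nat).
Hypothesis hb : is_lattice_basis w1 w2.
Hypothesis N_gt0 : (0 < N)%N.
Hypothesis k_order : forall j, (0 < j)%N -> (j < N)%N -> ~ Lat w1 w2 (j%:R * k).

Lemma torsion_coprime (a b : int) :
  N%:R * k = a%:~R * w1 + b%:~R * w2 -> exists x y : int, x * gcdz a b + y * N = 1.
Proof.
move=> Nk; have [x [y xy]] := Bezoutz (gcdz a b) N; exists x, y; rewrite xy.
set h := gcdz _ N; have /dvdzP [j Nj] : (h %| N%:Z)%Z by apply: dvdz_gcdr.
have /dvdzP [a1 a1h] : (h %| a)%Z by apply/(dvdz_trans (dvdz_gcdl _ _))/dvdz_gcdl.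
have /dvdzP [b1 b1h] : (h %| b)%Z by apply/(dvdz_trans (dvdz_gcdl _ _))/dvdz_gcdr.
have h_ge0 : 0 <= h by [].
have h_gt0 : 0 < h.
  by rewrite lt_def h_ge0 andbT; apply/eqP => h0; move: Nj; rewrite h0 mulr0; lia.
apply/eqP; apply: contraT => h_neq1; exfalso.
have [j_gt0 j_ltN] : (0 < `|j|)%N /\ (`|j| < N)%N by nia.
apply: (k_order j_gt0 j_ltN); exists a1, b1.
have h0 : (h%:~R : C) != 0 by rewrite intr_eq0 gt_eqF.
apply: (mulfI h0); rewrite natr_absz ger0_norm; last by nia.
by rewrite mulrA -intrM [h * j]mulrC -Nj -pmulrn Nk a1h b1h !intrM; ring.
Qed.

(* With N k = g (a' w1 + b' w2), g = gcd(a, b) coprime to N and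
   al a' + be b' = 1, the lattice Lambda + Z k has the basis
   ((a' w1 + b' w2) / N, - be w1 + al w2). *)
Lemma lat_add_torsion : Lat w1 w2 (N%:R * k) ->
  exists u1 u2, is_lattice_basis u1 u2 /\
    Lat u1 u2 = [set z | exists m : int, Lat w1 w2 (z - m%:~R * k)].
Proof.
move=> [a [b Nk]]; have NC : (N%:R : C) != 0 by rewrite pnatr_eq0 -lt0n.
have [g0|g_neq0] := eqVneq (gcdz a b) 0.
  have k0 : k = 0.
    move/eqP: g0 Nk; rewrite gcdz_eq0 => /andP [/eqP -> /eqP ->] /eqP.
    by rewrite !mul0r addr0 mulf_eq0 (negbTE NC) => /eqP.
  exists w1, w2; split => //; rewrite k0.
  apply: lat_add_eq; [exact: lat_l|exact: lat_r|exact: lat0|exists 0|exists 0];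
    rewrite mulr0 subr0; [exact: lat_l|exact: lat_r].
have /dvdzP [a' a'g] := dvdz_gcdl a b; have /dvdzP [b' b'g] := dvdz_gcdr a b.
set g := gcdz a b in g_neq0 a'g b'g.
have [al [be albe]] : exists al be : int, a' * al - b' * (- be) = 1.
  have [al [be]] := Bezoutz a b; rewrite -/g => albe; exists al, be.
  by apply: (mulIf g_neq0); rewrite mul1r -[in RHS]albe a'g b'g; ring.
have [x [y xy]] := torsion_coprime Nk; rewrite -/g in xy.
pose u1 := (a'%:~R * w1 + b'%:~R * w2) / N%:R.
pose u2 := (- be)%:~R * w1 + al%:~R * w2.
exists u1, u2; split; first exact: lat_basis_unimodular.
have Nu1 : N%:R * u1 = a'%:~R * w1 + b'%:~R * w2 by rewrite /u1 mulrC divfK.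
have k_u1 : k = g%:~R * u1.
  by apply: (mulfI NC); rewrite Nk mulrCA Nu1 a'g b'g !intrM; ring.
apply: lat_add_eq.
- exists (al * N), (- b').
  transitivity ((a' * al - b' * - be)%:~R * w1); first by rewrite albe mul1r.
  by rewrite !(intrB, intrM, intrN) -pmulrn -(mulrA al%:~R) Nu1 /u2 !intrN; ring.
- exists (be * N), a'.
  transitivity ((a' * al - b' * - be)%:~R * w2); first by rewrite albe mul1r.
  by rewrite !(intrB, intrM, intrN) -pmulrn -(mulrA be%:~R) Nu1 /u2 !intrN; ring.
- by exists g, 0; rewrite k_u1 mul0r addr0.
- exists x, (y * a'), (y * b').
  transitivity ((x * g + y * N)%:~R * u1 - x%:~R * k); first by rewrite xy mul1r.
  by rewrite k_u1 intrD !intrM -pmulrn mulrDl -(mulrA y%:~R) Nu1; ring.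
- by exists 0; rewrite mul0r subr0; exists (- be), al.
Qed.

End TorsionTranslation.

Definition quad_coords (c : int) (p : int * int) : int * int := (- p.2, p.1 + c * p.2).

Definition neg_coords (p : int * int) : int * int := (- p.1, - p.2).

Lemma pt12_quad (e u : C) (c : int) : e ^+ 2 = c%:~R * e - 1 ->
  forall p, e * pt12 u (e * u) p = pt12 u (e * u) (quad_coords c p).
Proof. by move=> e_quad p; rewrite /pt12 /= intrN intrD intrM; ring: e_quad. Qed.

Lemma pt12_neg (u1 u2 : C) p : -1 * pt12 u1 u2 p = pt12 u1 u2 (neg_coords p).
Proof. by rewrite /pt12 /= !intrN; ring. Qed.

Definition unit_trace (l : nat) : int := if l == 3%N then -1 else if l == 4%N then 0 else 1.

Lemma prim_root_quad (e : C) l : l \in [:: 3; 4; 6]%N -> e ^+ l = 1 ->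
  (forall j, (0 < j)%N -> (j < l)%N -> e ^+ j != 1) ->
  e ^+ 2 = (unit_trace l)%:~R * e - 1.
Proof.
move=> l346 el e_prim.
have e_neq1 j : (0 < j < l)%N -> e ^+ j - 1 != 0.
  by case/andP => j0 jl; rewrite subr_eq0 e_prim.
suff [d d0 dq] : exists2 d, d != 0 & d * (e ^+ 2 - (unit_trace l)%:~R * e + 1) = e ^+ l - 1.
  move/eqP: dq; rewrite el subrr mulf_eq0 (negbTE d0) /= => /eqP q0.
  by apply/eqP; rewrite -subr_eq0 -q0; apply/eqP; ring.
move: l346 e_neq1; rewrite !inE => /or3P [] /eqP -> e_neq1.
- by exists (e - 1); [rewrite -[e in e - 1]expr1 e_neq1|rewrite /unit_trace /=; ring].
- by exists (e ^+ 2 - 1); [rewrite e_neq1|rewrite /unit_trace /=; ring].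
- have eN1 : e + 1 != 0.
    apply: contraNneq (e_neq1 2%N isT) => /eqP; rewrite addr_eq0 => /eqP ->.
    by rewrite sqrrN expr1n subrr.
  by exists ((e ^+ 3 - 1) * (e + 1)); [rewrite mulf_neq0 ?e_neq1|rewrite /unit_trace /=; ring].
Qed.

Lemma num_branch_points_translations (w1 w2 : C) Gam :
  (forall e b, Gam (e, b) -> e = 1) -> num_branch_points w1 w2 Gam 0.
Proof.
move=> Gam_trans; rewrite /num_branch_points.
suff -> : branch_points w1 w2 Gam = set0.
  by have -> : [set: 'I_0] = set0 by rewrite predeqE => -[].
rewrite -subset0 => O [z [_ [e [b [Geb ntriv Lfix]]] _]]; apply: ntriv.
by move: Lfix; rewrite (Gam_trans _ _ Geb) mul1r addrC addKr.
Qed.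

Lemma num_branch_points_cyclic (w1 w2 : C) Gam Gp l :
  is_lattice_basis w1 w2 -> l \in [:: 3; 4; 6]%N -> cyclic_Aut0_of_order w1 w2 l Gp ->
  semidirect_is w1 w2 Gam Gp [set (1, 0)] -> num_branch_points w1 w2 Gam 2.
Proof.
move=> hb l346 [e [eA el e_prim ->]] hsd; have hG := hsd.1.
have e_quad := prim_root_quad l346 el e_prim.
have c_small : (-1 <= unit_trace l <= 1)%R by move: l346; rewrite !inE => /or3P [] /eqP ->.
have [v v0 Lv] := lat_quad_span e_quad c_small hb (in_Aut0_lat eA).
have Gv : Gam (1, v) by apply: (trans_lat hG); rewrite Lv; apply: lat_l.
have Gev : Gam (1, e * v) by apply: (trans_lat hG); rewrite Lv; apply: lat_r.
have Leev : Lat v (e * v) (e * (e * v)).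
  by rewrite -Lv; apply: (in_Aut0_lat eA); rewrite Lv; apply: lat_r.
have K0 (p : C * C) : [set (1, 0)] p -> p.1 = 1 /\ Lat v (e * v) p.2.
  by move=> ->; split; [|apply: lat0].
have latM : Lat w1 w2 `<=` Lat v (e * v) by rewrite Lv.
have GE := semidirectE eA erefl hsd latM (lat_r _ _) Leev K0 Gv Gev.
have count ps : branch_reps12 (quad_coords (unit_trace l)) l ps ->
    num_branch_points w1 w2 Gam (size ps).
  have l12 : (l %| 12)%N by move: l346; rewrite !inE => /or3P [] /eqP ->.
  exact: (num_branch_points_grid hG (quad_basis e_quad c_small v0) latM GE el e_prim l12
    (pt12_quad v e_quad)).
move: l346 count; rewrite !inE => /or3P [] /eqP -> count.
- exact: (count [:: (8, 4); (4, 8)]).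
- exact: (count [:: (6, 0); (6, 6)]).
- exact: (count [:: (4, 4); (6, 0)]).
Qed.

Lemma lat_half (v e k : C) : Lat v (e * v) (2 * k) -> Lat (v / 2) (e * (v / 2)) k.
Proof.
have n2 : (2 : C) != 0 by rewrite pnatr_eq0.
by move=> [m [n mn]]; exists m, n; apply: (mulfI n2); rewrite mn; field.
Qed.

(* Modulo Lat v (e v), k is one of the half-periods u, e u, u + e u (u = v / 2),
   which e permutes cyclically; so u is a translation of Gam. *)
Lemma trans_half_lattice (w1 w2 e v k : C) Gam :
  is_aut_subgroup w1 w2 Gam -> e ^+ 2 = - e - 1 -> Lat w1 w2 = Lat v (e * v) ->
  Gam (e, 0) -> Gam (1, k) -> Lat w1 w2 (2 * k) -> ~ Lat w1 w2 k -> Gam (1, v / 2).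
Proof.
move=> hG e_quad Lv Ge Gk; rewrite Lv => /lat_half [m [n mn]] k_notin.
set u := v / 2 in mn *; have vu : v = 2%:~R * u by rewrite /u mulrC divfK ?pnatr_eq0.
have Geu w : Gam (1, w) -> Gam (1, e * w) := trans_conj hG Ge.
have Gv : Gam (1, v) by apply: (trans_lat hG); rewrite Lv; apply: lat_l.
pose r := (m %% 2)%Z; pose s := (n %% 2)%Z.
have Grs : Gam (1, r%:~R * u + s%:~R * (e * u)).
  have -> : r%:~R * u + s%:~R * (e * u) = k + (- (m %/ 2)%Z)%:~R * v + (- (n %/ 2)%Z)%:~R * (e * v).
    by rewrite mn vu {1}(divz_eq m 2) {1}(divz_eq n 2) !intrD !intrM !intrN; ring.
  apply: (transD hG); first apply: (transD hG) => //.
  - by apply: (transZ hG).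
  - by apply: (transZ hG); apply: Geu.
have [r0|r1] : r = 0 \/ r = 1 by rewrite /r; lia.
all: have [s0|s1] : s = 0 \/ s = 1 by rewrite /s; lia.
all: rewrite ?r0 ?r1 ?s0 ?s1 ?mul0r ?mul1r ?add0r ?addr0 in Grs.
- case: k_notin; exists (m %/ 2)%Z, (n %/ 2)%Z.
  by rewrite mn vu {1}(divz_eq m 2) {1}(divz_eq n 2) -/r -/s r0 s0 !intrD !intrM; ring.
- have := transD hG (transN hG (Geu _ Grs)) (transN hG Grs).
  by rewrite mulrA -expr2 e_quad; congr (Gam (1, _)); ring.
- by [].
- have := transN hG (Geu _ Grs).
  by rewrite mulrDr mulrA -expr2 e_quad; congr (Gam (1, _)); ring.
Qed.

Lemma num_branch_points_klein (w1 w2 : C) Gam Gp K :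
  is_lattice_basis w1 w2 -> cyclic_Aut0_of_order w1 w2 3 Gp -> klein_t w1 w2 K ->
  semidirect_is w1 w2 Gam Gp K -> num_branch_points w1 w2 Gam 2.
Proof.
move=> hb [e [eA e3 e_prim ->]] [k1 [k2 [Lk1 Lk2 [k1_notin _ _] ->]]] hsd.
have hG := hsd.1; have e_quad := prim_root_quad (isT : 3%N \in [:: 3; 4; 6]%N) e3 e_prim.
have [v v0 Lv] := lat_quad_span e_quad isT hb (in_Aut0_lat eA).
have e_quad' : e ^+ 2 = - e - 1 by rewrite e_quad mulN1r.
set u := v / 2; have u0 : u != 0 by rewrite mulf_neq0 ?invr_eq0 ?pnatr_eq0.
have Ge : Gam (e, 0) by apply: hsd.2.1; left; exists 1%N; rewrite expr1.
have Gk1 : Gam (1, k1).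
  by apply: hsd.2.1; right; exists 1%N, 0%N; rewrite mul1r mul0r addr0.
have Gu : Gam (1, u) by apply: trans_half_lattice hG e_quad' Lv Ge Gk1 Lk1 k1_notin.
have latM : Lat w1 w2 `<=` Lat u (e * u).
  rewrite Lv; apply: lat_sub; apply: lat_half; rewrite -/u.
    by exists 2, 0; rewrite mul0r addr0.
  by exists 0, 2; rewrite mul0r add0r mulrCA.
have Leeu : Lat u (e * u) (e * (e * u)).
  by exists (-1), (-1); rewrite mulrA -expr2 e_quad'; ring.
have KM (p : C * C) : [set p | exists a b : nat, p = (1, a%:R * k1 + b%:R * k2)] p ->
    p.1 = 1 /\ Lat u (e * u) p.2.
  move=> [a [b ->]]; split => //; apply: latD; apply: (@latZ _ _ (Posz _)).
    by apply: lat_half; rewrite -Lv.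
  by apply: lat_half; rewrite -Lv.
have GE := semidirectE eA erefl hsd latM (lat_r _ _) Leeu KM Gu (trans_conj hG Ge Gu).
exact: (num_branch_points_grid hG (quad_basis e_quad isT u0) latM GE e3 e_prim isT
  (pt12_quad u e_quad) (ps := [:: (8, 4); (4, 8)])).
Qed.

Lemma num_branch_points_involution (w1 w2 : C) Gam Gp K N :
  is_lattice_basis w1 w2 -> (1 <= N)%N -> cyclic_Aut0_of_order w1 w2 2 Gp ->
  cyclic_t_of_order w1 w2 N K -> semidirect_is w1 w2 Gam Gp K ->
  num_branch_points w1 w2 Gam 3.
Proof.
move=> hb N_gt0 [e [eA e2 e_prim ->]] [k [Nk k_order ->]] hsd; have hG := hsd.1.
have eN1 : e = -1.
  have /eqP : (e - 1) * (e + 1) = 0 by rewrite -subr_sqr expr1n e2 subrr.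
  rewrite mulf_eq0 subr_eq0 -[e in e == 1]expr1 (negbTE (e_prim 1%N isT isT)) /=.
  by rewrite addr_eq0 => /eqP.
have [u1 [u2 [hbu Lu]]] := lat_add_torsion hb N_gt0 k_order Nk.
have Gk : Gam (1, k) by apply: hsd.2.1; right; exists 1%N; rewrite mul1r.
have GM z : Lat u1 u2 z -> Gam (1, z).
  rewrite Lu => -[m Lzm]; rewrite -(subrK (m%:~R * k) z).
  by apply: (transD hG); [apply: (trans_lat hG)|apply: (transZ hG)].
have latM : Lat w1 w2 `<=` Lat u1 u2 by rewrite Lu => z Lz; exists 0; rewrite mul0r subr0.
have Lneg z : Lat u1 u2 z -> Lat u1 u2 (e * z) by rewrite eN1 mulN1r; apply: latN.
have KM (p : C * C) : [set p | exists j : nat, p = (1, j%:R * k)] p ->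
    p.1 = 1 /\ Lat u1 u2 p.2.
  by move=> [j ->]; split => //; rewrite Lu; exists j; rewrite subrr; apply: lat0.
have GE := semidirectE eA erefl hsd latM (Lneg _ (lat_l _ _)) (Lneg _ (lat_r _ _)) KM
  (GM _ (lat_l _ _)) (GM _ (lat_r _ _)).
have e_neg p : e * pt12 u1 u2 p = pt12 u1 u2 (neg_coords p) by rewrite eN1 pt12_neg.
exact: (num_branch_points_grid hG hbu latM GE e2 e_prim isT e_neg
  (ps := [:: (6, 0); (0, 6); (6, 6)])).
Qed.

End Torus.

Unset Implicit Arguments.

Theorem lemma4p6 (R : realType) (w1 w2 : R[i]) (Gam : set (R[i] * R[i])) :
  is_lattice_basis w1 w2 ->
  is_finite_aut_subgroup w1 w2 Gam ->
  [/\ (forall e b, Gam (e, b) -> e = 1) -> num_branch_points w1 w2 Gam 0,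
      ((exists l Gp, [/\ l \in [:: 3; 4; 6]%N, cyclic_Aut0_of_order w1 w2 l Gp &
                        semidirect_is w1 w2 Gam Gp [set (1, 0)]]) \/
       (exists Gp K, [/\ cyclic_Aut0_of_order w1 w2 3 Gp, klein_t w1 w2 K &
                        semidirect_is w1 w2 Gam Gp K])) ->
        num_branch_points w1 w2 Gam 2 &
      forall N : nat, (1 <= N)%N ->
        (exists Gp K, [/\ cyclic_Aut0_of_order w1 w2 2 Gp,
                          cyclic_t_of_order w1 w2 N K &
                          semidirect_is w1 w2 Gam Gp K]) ->
        num_branch_points w1 w2 Gam 3].
Proof.
(* Finiteness of Gam is not used: each case describes Gam by generators. *)
move=> hb _; split.
- exact: num_branch_points_translations.
- case=> [[l [Gp [l346 hGp hsd]]]|[Gp [K [hGp hK hsd]]]].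
  + exact: num_branch_points_cyclic hb l346 hGp hsd.
  + exact: num_branch_points_klein hb hGp hK hsd.
- move=> N N_gt0 [Gp [K [hGp hK hsd]]].
  exact: num_branch_points_involution hb N_gt0 hGp hK hsd.
Qed.
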